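(* The set $K$ defined in the context has empty interior in $\mathbb{R}^2$.
   Context: For $k\ge 0$ and $n\ge 1$ let $t_{k,n}:=\frac{1}{2^k n}$. Define the similarities of $\mathbb{R}^2$: $U(x,y)=\left(\frac{x}{2},\frac{y+1}{2}\right)$, $D_0(x,y)=\left(\frac{x}{2},\frac{y}{2}\right)$, and $D_{k,n}(x,y)=\left(\frac{x+t_{k,n}}{2},\frac{y}{2}\right)$ for $k\ge0,n\ge1$. $K$ is the unique non-empty compact set $K\subset\mathbb{R}^2$ satisfying $K=U(K)\cup D_0(K)\cup\bigcup_{k\ge0,n\ge1}D_{k,n}(K)$. *)

From Stdlib Require Import Reals List.
Open Scope R_scope.

Definition pt := (R * R)%type.

Definition dist2 (p q : pt) : R :=
  sqrt ((fst p - fst q) ^ 2 + (snd p - snd q) ^ 2).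

Definition open2 (A : pt -> Prop) : Prop :=
  forall p, A p -> exists r, 0 < r /\ forall q, dist2 p q < r -> A q.

Definition compact2 (K : pt -> Prop) : Prop :=
  forall (I : Type) (O : I -> pt -> Prop),
    (forall i, open2 (O i)) ->
    (forall p, K p -> exists i, O i p) ->
    exists l : list I, forall p, K p -> exists i, In i l /\ O i p.

Definition interior2 (A : pt -> Prop) (p : pt) : Prop :=
  exists r, 0 < r /\ forall q, dist2 p q < r -> A q.

Definition t (k n : nat) : R := 1 / (2 ^ k * INR n).

Definition U (p : pt) : pt := (fst p / 2, (snd p + 1) / 2).
Definition D0 (p : pt) : pt := (fst p / 2, snd p / 2).
Definition Dkn (k n : nat) (p : pt) : pt := ((fst p + t k n) / 2, snd p / 2).

Definition IFS_fixed (K : pt -> Prop) : Prop :=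
  forall p, K p <->
    ((exists q, K q /\ p = U q) \/
     (exists q, K q /\ p = D0 q) \/
     (exists (k n : nat) q, (1 <= n)%nat /\ K q /\ p = Dkn k n q)).

From Stdlib Require Import Reals List Lra Lia.
Open Scope R_scope.

(* A compact fixed point K lies in the unit square. We show, by induction on m,
   that for every dyadic interval I of length 2^-m and every open interval J,
   some subinterval J' of J and some thin top slice S of I leave J' x S disjoint
   from K; any ball then contains such a rectangle. For m = 0 only the slice
   below y = 1 matters, and there K hugs the left edge. Passing from m to m+1,
   the preimages of J' x S under U, D0 and the D_{k,n} are rectangles of the
   level-m kind: the finitely many large shifts t_{k,n} are handled one at a
   time, the small ones all at once by shrinking the interval. *)

Lemma Rabs_le_sqrt_sum_sq a b : Rabs a <= sqrt (a ^ 2 + b ^ 2).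
Proof.
  rewrite <- sqrt_Rsqr_abs. apply sqrt_le_1_alt.
  pose proof (pow2_ge_0 b). unfold Rsqr. simpl. lra.
Qed.

Lemma sqrt_sum_sq_le_Rabs_add a b : sqrt (a ^ 2 + b ^ 2) <= Rabs a + Rabs b.
Proof.
  pose proof (Rabs_pos a). pose proof (Rabs_pos b).
  rewrite <- (sqrt_pow2 (Rabs a + Rabs b)) by lra. apply sqrt_le_1_alt.
  rewrite <- (pow2_abs a), <- (pow2_abs b). nra.
Qed.

Lemma Rabs_fst_le_dist2 p q : Rabs (fst p - fst q) <= dist2 p q.
Proof. apply Rabs_le_sqrt_sum_sq. Qed.

Lemma Rabs_snd_le_dist2 p q : Rabs (snd p - snd q) <= dist2 p q.
Proof. unfold dist2. rewrite Rplus_comm. apply Rabs_le_sqrt_sum_sq. Qed.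

Lemma dist2_le_Rabs_add p q :
  dist2 p q <= Rabs (fst p - fst q) + Rabs (snd p - snd q).
Proof. apply sqrt_sum_sq_le_Rabs_add. Qed.

Lemma nat_list_bounded (l : list nat) : exists M, forall i, In i l -> INR i <= M.
Proof.
  induction l as [|a l [M HM]]; [exists 0; intros i []|].
  exists (Rmax (INR a) M). intros i [<-|Hi]; [apply Rmax_l|].
  eapply Rle_trans; [apply HM, Hi|apply Rmax_r].
Qed.

Lemma compact2_bounded K : compact2 K ->
  exists M, forall p, K p -> Rabs (fst p) <= M /\ Rabs (snd p) <= M.
Proof.
  intros HK.
  destruct (HK nat (fun i p => Rabs (fst p) < INR i /\ Rabs (snd p) < INR i))
    as [l Hl].
  - intros i p [Hx Hy].
    exists (Rmin (INR i - Rabs (fst p)) (INR i - Rabs (snd p))).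
    split; [apply Rmin_glb_lt; lra|]. intros q Hpq.
    pose proof (Rmin_l (INR i - Rabs (fst p)) (INR i - Rabs (snd p))).
    pose proof (Rmin_r (INR i - Rabs (fst p)) (INR i - Rabs (snd p))).
    pose proof (Rabs_fst_le_dist2 p q). pose proof (Rabs_snd_le_dist2 p q).
    pose proof (Rabs_triang_inv (fst q) (fst p)).
    pose proof (Rabs_triang_inv (snd q) (snd p)).
    rewrite (Rabs_minus_sym (fst q)), (Rabs_minus_sym (snd q)) in *. split; lra.
  - intros p _. destruct (INR_unbounded (Rabs (fst p) + Rabs (snd p))) as [n Hn].
    exists n. pose proof (Rabs_pos (fst p)). pose proof (Rabs_pos (snd p)). lra.
  - destruct (nat_list_bounded l) as [M HM]. exists M. intros p Hp.
    destruct (Hl p Hp) as [i [Hi [Hx Hy]]]. specialize (HM i Hi). lra.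
Qed.

Lemma half_pow_pos_le1 j : 0 < (/2) ^ j <= 1.
Proof.
  split; [apply pow_lt; lra|]. rewrite <- (pow1 j). apply pow_incr. lra.
Qed.

Lemma half_pow_le j j' : (j <= j')%nat -> (/2) ^ j' <= (/2) ^ j.
Proof.
  intros Hj. replace j' with (j + (j' - j))%nat by lia. rewrite pow_add.
  pose proof (half_pow_pos_le1 j). pose proof (half_pow_pos_le1 (j' - j)). nra.
Qed.

Lemma half_pow_lt e : 0 < e -> exists n, (/2) ^ n < e.
Proof.
  intros He. destruct (pow_lt_1_zero (/2)) with (y := e) as [n Hn];
    [rewrite Rabs_pos_eq; lra|lra|].
  exists n. specialize (Hn n (le_n n)).
  rewrite Rabs_pos_eq in Hn by (apply pow_le; lra). exact Hn.
Qed.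

Lemma le_of_le_add_half_pow a b M : 0 <= M ->
  (forall n, a <= b + M * (/2) ^ n) -> a <= b.
Proof.
  intros HM Hab. destruct (Rle_or_lt a b) as [|Hba]; [assumption|].
  destruct (half_pow_lt ((a - b) / (M + 1))) as [n Hn];
    [apply Rdiv_lt_0_compat; lra|].
  specialize (Hab n). pose proof (half_pow_pos_le1 n).
  apply (Rmult_lt_compat_l (M + 1)) in Hn; [|lra].
  replace ((M + 1) * ((a - b) / (M + 1))) with (a - b) in Hn by (field; lra).
  nra.
Qed.

Lemma t_pos_le1 k n : (1 <= n)%nat -> 0 < t k n <= 1.
Proof.
  intros Hn. unfold t.
  assert (1 <= 2 ^ k) by (apply pow_R1_Rle; lra).
  assert (1 <= INR n) by (apply (le_INR 1); exact Hn).
  assert (1 <= 2 ^ k * INR n) by nra.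
  split; [apply Rdiv_lt_0_compat; lra|].
  unfold Rdiv. rewrite Rmult_1_l, <- Rinv_1. apply Rinv_le_contravar; lra.
Qed.

Lemma t_eq_inv_INR k n : t k n = / INR (2 ^ k * n).
Proof.
  unfold t. rewrite mult_INR, pow_INR. simpl (INR 2). unfold Rdiv.
  now rewrite Rmult_1_l.
Qed.

Definition inv_nats (N : nat) : list R := map (fun i => / INR i) (seq 1 N).

Lemma t_In_inv_nats k n N : (1 <= n)%nat -> / t k n <= INR N -> In (t k n) (inv_nats N).
Proof.
  intros Hn HN. rewrite t_eq_inv_INR, Rinv_inv in HN. apply INR_le in HN.
  assert (2 ^ k <> 0)%nat by (apply Nat.pow_nonzero; lia).
  apply in_map_iff. exists (2 ^ k * n)%nat.
  split; [symmetry; apply t_eq_inv_INR|]. apply in_seq. nia.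
Qed.

(* [y] lies in the top [2^-j]-th part of the dyadic interval [[c/2^m, (c+1)/2^m]]. *)
Definition in_strip (m : nat) (c : R) (j : nat) (y : R) : Prop :=
  c + 1 - (/2) ^ j < y * 2 ^ m < c + 1.

Lemma in_strip_weaken m c j j' y :
  (j <= j')%nat -> in_strip m c j' y -> in_strip m c j y.
Proof. unfold in_strip. intros Hj. pose proof (half_pow_le j j' Hj). lra. Qed.

Lemma in_strip_S_double m c j y : in_strip (S m) c j y -> in_strip m c j (2 * y).
Proof.
  unfold in_strip. replace (2 * y * 2 ^ m) with (y * 2 ^ S m) by (simpl; ring).
  trivial.
Qed.

Lemma in_strip_S_double_sub1 m c j y :
  in_strip (S m) c j y -> in_strip m (c - 2 ^ m) j (2 * y - 1).
Proof.
  unfold in_strip. replace ((2 * y - 1) * 2 ^ m) with (y * 2 ^ S m - 2 ^ m) by (simpl; ring).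
  lra.
Qed.

Definition in_unit_square (K : pt -> Prop) : Prop :=
  forall p, K p -> 0 <= fst p <= 1 /\ 0 <= snd p <= 1.

Section FixedSet.

Variable K : pt -> Prop.
Hypothesis K_fixed : IFS_fixed K.

Lemma fixed_preimage p : K p -> exists q, K q /\
  (fst q = 2 * fst p /\ snd q = 2 * snd p - 1 \/
   exists s, (s = 0 \/ exists k n, (1 <= n)%nat /\ s = t k n) /\
     fst q = 2 * fst p - s /\ snd q = 2 * snd p).
Proof.
  intros Hp. apply K_fixed in Hp.
  destruct Hp as [[q [Hq ->]]|[[q [Hq ->]]|[k [n [q [Hn [Hq ->]]]]]]];
    exists q; split; try assumption; unfold U, D0, Dkn; simpl.
  - left. split; field.
  - right. exists 0. split; [now left|]. split; field.
  - right. exists (t k n). split; [right; now exists k, n|]. split; field.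
Qed.

Lemma fixed_margin_half_pow M : 0 <= M ->
  (forall p, K p -> Rabs (fst p) <= M /\ Rabs (snd p) <= M) ->
  forall n p, K p ->
    - (M * (/2) ^ n) <= fst p <= 1 + M * (/2) ^ n /\
    - (M * (/2) ^ n) <= snd p <= 1 + M * (/2) ^ n.
Proof.
  intros HM Hbound n. induction n as [|n IH]; intros p Hp.
  - destruct (Hbound p Hp) as [Hx Hy]. simpl. rewrite Rmult_1_r.
    revert Hx Hy. unfold Rabs.
    destruct (Rcase_abs (fst p)), (Rcase_abs (snd p)); intros; lra.
  - assert (Hhalf : M * (/2) ^ S n = M * (/2) ^ n / 2) by (simpl; field).
    assert (0 <= M * (/2) ^ n) by (apply Rmult_le_pos; [|apply pow_le]; lra).
    rewrite Hhalf.
    destruct (fixed_preimage p Hp) as [q [Hq Hpq]]. specialize (IH q Hq).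
    destruct Hpq as [[Hx Hy]|[s [Hs [Hx Hy]]]]; [lra|].
    assert (0 <= s <= 1)
      by (destruct Hs as [->|[k [m [Hm ->]]]]; [lra|pose proof (t_pos_le1 k m Hm); lra]).
    lra.
Qed.

Lemma fixed_in_unit_square :
  (exists M, forall p, K p -> Rabs (fst p) <= M /\ Rabs (snd p) <= M) ->
  in_unit_square K.
Proof.
  intros [M0 HM0]. set (M := Rmax M0 0).
  assert (HM : 0 <= M) by apply Rmax_r.
  assert (HM0M : M0 <= M) by apply Rmax_l.
  assert (Hbound : forall p, K p -> Rabs (fst p) <= M /\ Rabs (snd p) <= M).
  { intros p Hp. destruct (HM0 p Hp). split; lra. }
  intros p Hp.
  pose proof (fun n => fixed_margin_half_pow M HM Hbound n p Hp) as Hmargin.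
  repeat split; apply (le_of_le_add_half_pow _ _ M HM); intros n;
    destruct (Hmargin n) as [[] []]; lra.
Qed.

Hypothesis K_unit : in_unit_square K.

(* Only U maps into the upper half of the unit square. *)
Lemma fixed_top_left j q : K q -> 1 - (/2) ^ j < snd q -> fst q <= (/2) ^ j.
Proof.
  revert q. induction j as [|j IH]; intros q Hq Hy.
  - simpl. destruct (K_unit q Hq). lra.
  - pose proof (half_pow_pos_le1 j). simpl in *.
    destruct (fixed_preimage q Hq) as [q' [Hq' Hqq']].
    destruct (K_unit q' Hq').
    destruct Hqq' as [[Hx Hy']|[s [_ [Hx Hy']]]]; [|lra].
    assert (fst q' <= (/2) ^ j) by (apply IH; [assumption|lra]). lra.
Qed.

Definition has_gap (m : nat) (c u v : R) : Prop :=
  exists u' v' j, u <= u' /\ u' < v' /\ v' <= v /\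
    forall q, K q -> u' < fst q < v' -> ~ in_strip m c j (snd q).

Lemma has_gap_base z u v : u < v -> has_gap 0 (IZR z) u v.
Proof.
  intros Huv. unfold has_gap, in_strip. simpl.
  destruct (Z.lt_trichotomy z 0) as [Hz|[->|Hz]].
  - assert (IZR z <= -1) by (apply IZR_le; lia). exists u, v, 0%nat. do 3 (split; [lra|]).
    intros q Hq _. destruct (K_unit q Hq). simpl. lra.
  - destruct (Rle_or_lt v 0) as [Hv|Hv].
    + exists u, v, 0%nat. do 3 (split; [lra|]).
      intros q Hq Hx. destruct (K_unit q Hq). lra.
    + destruct (half_pow_lt v Hv) as [N HN].
      exists (Rmax u ((/2) ^ N)), v, N.
      pose proof (Rmax_l u ((/2) ^ N)). pose proof (Rmax_r u ((/2) ^ N)).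
      split; [lra|split; [apply Rmax_lub_lt; lra|split; [lra|]]].
      intros q Hq Hx Hy.
      assert (fst q <= (/2) ^ N) by (apply fixed_top_left; [assumption|lra]). lra.
  - assert (1 <= IZR z) by (apply IZR_le; lia). exists u, v, 0%nat. do 3 (split; [lra|]).
    intros q Hq _. destruct (K_unit q Hq). simpl. lra.
Qed.

Lemma has_gap_shifts m c : (forall u v, u < v -> has_gap m c u v) ->
  forall (ss : list R) u v, u < v -> exists u' v' j,
    u <= u' /\ u' < v' /\ v' <= v /\
    forall s q, In s ss -> K q -> 2 * u' - s < fst q < 2 * v' - s ->
      ~ in_strip m c j (snd q).
Proof.
  intros Hgap ss. induction ss as [|s ss IH]; intros u v Huv.
  - exists u, v, 0%nat. do 3 (split; [lra|]). intros s q [].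
  - destruct (IH u v Huv) as [u1 [v1 [j1 [Hu1 [Huv1 [Hv1 Hgap1]]]]]].
    destruct (Hgap (2 * u1 - s) (2 * v1 - s)) as [a [b [j2 [Ha [Hab [Hb Hgap2]]]]]];
      [lra|].
    exists ((a + s) / 2), ((b + s) / 2), (Nat.max j1 j2).
    do 3 (split; [lra|]).
    intros s' q [<-|Hs'] Hq Hx Hstrip.
    + apply (Hgap2 q Hq); [lra|].
      apply (in_strip_weaken _ _ _ _ _ (Nat.le_max_r j1 j2) Hstrip).
    + apply (Hgap1 s' q Hs' Hq); [lra|].
      apply (in_strip_weaken _ _ _ _ _ (Nat.le_max_l j1 j2) Hstrip).
Qed.

(* A point with first coordinate in [(a + d)/2, b/2] has D_{k,n}-preimages in
   [a, b] as soon as t_{k,n} <= d; the finitely many larger shifts are the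
   inverses of integers at most N. *)
Lemma has_gap_S m : (forall z u v, u < v -> has_gap m (IZR z) u v) ->
  forall z u v, u < v -> has_gap (S m) (IZR z) u v.
Proof.
  intros IH z u v Huv.
  destruct (IH (z - 2 ^ Z.of_nat m)%Z (2 * u) (2 * v))
    as [u1 [v1 [j1 [Hu1 [Huv1 [Hv1 Hgap1]]]]]]; [lra|].
  rewrite minus_IZR, <- pow_IZR in Hgap1.
  destruct (IH z u1 v1 Huv1) as [a [b [j2 [Ha [Hab [Hb Hgap2]]]]]].
  set (d := (b - a) / 2).
  assert (Hd : a + 2 * d = b) by (unfold d; field).
  destruct (INR_unbounded (/ d)) as [N HN].
  destruct (has_gap_shifts m (IZR z) (IH z) (inv_nats N) ((a + d) / 2) (b / 2))
    as [u' [v' [j3 [Hu' [Huv' [Hv' Hgap3]]]]]]; [lra|].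
  set (J := Nat.max j1 (Nat.max j2 j3)).
  exists u', v', J. do 3 (split; [lra|]).
  intros p Hp Hx Hstrip.
  destruct (fixed_preimage p Hp) as [q [Hq [[Hqx Hqy]|[s [Hs [Hqx Hqy]]]]]].
  - apply (Hgap1 q Hq); [lra|]. rewrite Hqy.
    apply (in_strip_weaken _ _ j1 J); [lia|]. now apply in_strip_S_double_sub1.
  - assert (Hstrip' : in_strip m (IZR z) J (snd q))
      by (rewrite Hqy; now apply in_strip_S_double).
    destruct (Rle_or_lt s d) as [Hsd|Hsd].
    + assert (0 <= s)
        by (destruct Hs as [->|[k [n [Hn ->]]]]; [lra|pose proof (t_pos_le1 k n Hn); lra]).
      apply (Hgap2 q Hq); [lra|].
      apply (in_strip_weaken _ _ j2 J); [lia|exact Hstrip'].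
    + destruct Hs as [->|[k [n [Hn ->]]]]; [lra|].
      assert (/ t k n <= INR N).
      { pose proof (Rinv_lt_contravar d (t k n) ltac:(pose proof (t_pos_le1 k n Hn); nra) Hsd).
        lra. }
      apply (Hgap3 (t k n) q (t_In_inv_nats k n N Hn ltac:(assumption)) Hq); [lra|].
      apply (in_strip_weaken _ _ j3 J); [lia|exact Hstrip'].
Qed.

Lemma has_gap_all m z u v : u < v -> has_gap m (IZR z) u v.
Proof.
  revert z u v. induction m as [|m IH].
  - exact has_gap_base.
  - exact (has_gap_S m IH).
Qed.

Lemma fixed_interior_empty p : ~ interior2 K p.
Proof.
  intros [r [Hr Hball]].
  destruct (half_pow_lt (r / 2)) as [m Hm]; [lra|].
  pose proof (half_pow_pos_le1 m).
  assert (H2m : (/2) ^ m * 2 ^ m = 1)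
    by (rewrite <- Rpow_mult_distr, Rinv_l, pow1; lra).
  set (z := (up (snd p * 2 ^ m) - 1)%Z).
  assert (Hz : IZR z <= snd p * 2 ^ m < IZR z + 1)
    by (destruct (archimed (snd p * 2 ^ m)); unfold z; rewrite minus_IZR; lra).
  destruct (has_gap_all m z (fst p - r / 2) (fst p + r / 2))
    as [u [v [j [Hu [Huv [Hv Hgap]]]]]]; [lra|].
  pose proof (half_pow_pos_le1 j).
  set (y := (IZR z + 1 - (/2) ^ j / 2) * (/2) ^ m).
  assert (Hy : y * 2 ^ m = IZR z + 1 - (/2) ^ j / 2)
    by (unfold y; rewrite Rmult_assoc, H2m; ring).
  apply (Hgap ((u + v) / 2, y)); simpl; [|lra|unfold in_strip; lra].
  apply Hball. eapply Rle_lt_trans; [apply dist2_le_Rabs_add|]. simpl.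
  assert (Rabs (fst p - (u + v) / 2) < r / 2) by (apply Rabs_def1; lra).
  assert (Rabs (snd p - y) < r / 2).
  { replace (snd p - y) with ((snd p * 2 ^ m - y * 2 ^ m) * (/2) ^ m)
      by (rewrite Rmult_minus_distr_r, !Rmult_assoc, (Rmult_comm (2 ^ m)), H2m; ring).
    rewrite Rabs_mult, (Rabs_pos_eq ((/2) ^ m)) by lra.
    assert (Rabs (snd p * 2 ^ m - y * 2 ^ m) < 1) by (apply Rabs_def1; lra).
    nra. }
  lra.
Qed.

End FixedSet.

Theorem proposition2p3 :
  forall K : pt -> Prop,
    (exists p, K p) -> compact2 K -> IFS_fixed K ->
    forall p, ~ interior2 K p.
Proof.
  intros K _ Hcompact Hfixed.
  apply fixed_interior_empty; [exact Hfixed|].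
  apply fixed_in_unit_square; [exact Hfixed|].
  exact (compact2_bounded K Hcompact).
Qed.
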